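(* Let $0<m<M$ and let $A,B\in\mathbb{P}_n^+$ satisfy $mI\le A\le MI$ and $mI\le B\le MI$. If $f:[0,\infty)\to[0,\infty)$ is a differentiable convex function with $f(0)=0$, then (i) $(\det f(A))^{1/n}+(\det f(B))^{1/n}\le \frac{f(M)}{M}(\det(A+B))^{1/n}$; (ii) $\frac{f(m)}{m}\big((\det A)^{1/n}+(\det B)^{1/n}\big)\le (\det(f(A)+f(B)))^{1/n}$. If $f:[0,\infty)\to[0,\infty)$ is a differentiable concave function with $f(0)=0$, then (iii) $(\det f(A))^{1/n}+(\det f(B))^{1/n}\le \frac{f(m)}{m}(\det(A+B))^{1/n}$; (iv) $\frac{f(M)}{M}\big((\det A)^{1/n}+(\det B)^{1/n}\big)\le (\det(f(A)+f(B)))^{1/n}$.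
   Context: $\mathbb{P}_n^+$ denotes the set of $n\times n$ complex positive definite matrices, $I$ is the identity matrix, $\le$ is the Löwner order, and $f(A)$ is defined by functional calculus. *)

From HB Require Import structures.
From mathcomp Require Import all_boot all_order all_algebra.
From mathcomp Require Import all_classical all_reals topology normedtype derive.
From mathcomp Require Import complex.
Set Implicit Arguments. Unset Strict Implicit. Unset Printing Implicit Defensive.
Import Order.TTheory GRing.Theory Num.Theory numFieldNormedType.Exports.
Local Open Scope ring_scope.
Local Open Scope classical_set_scope.
Local Open Scope sesquilinear_scope.

Definition psdmx (R : realType) (n : nat) (A : 'M[R[i]]_n) : Prop :=
  A \is hermsymmx /\ forall v : 'rV[R[i]]_n, 0 <= (v *m A *m v ^t*) 0 0.

Definition posdefmx (R : realType) (n : nat) (A : 'M[R[i]]_n) : Prop :=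
  A \is hermsymmx /\
  forall v : 'rV[R[i]]_n, v != 0 -> 0 < (v *m A *m v ^t*) 0 0.

Definition loewner_le (R : realType) (n : nat) (A B : 'M[R[i]]_n) : Prop :=
  psdmx (B - A).

(* Functional calculus for a real function f applied to a (normal, in
   particular Hermitian) matrix A = U^-1 diag(d) U with U unitary
   (MathComp's spectral decomposition): f(A) = U^-1 diag(f(d)) U, where f
   is applied to the real parts of the (real) eigenvalues. *)
Definition mx_fun (R : realType) (n : nat) (f : R -> R) (A : 'M[R[i]]_n)
  : 'M[R[i]]_n :=
  invmx (spectralmx A)
    *m diag_mx (map_mx (fun z : R[i] => ((f (complex.Re z))%:C)%C)
                       (spectral_diag A))
    *m spectralmx A.

Definition differentiable_nonneg (R : realType) (f : R -> R) : Prop :=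
  (forall x : R, 0 < x -> derivable f x 1) /\
  cvg ((f h - f 0) / h @[h --> 0^'+]).

Definition convex_nonneg (R : realType) (f : R -> R) : Prop :=
  forall x y t : R, 0 <= x -> 0 <= y -> 0 <= t <= 1 ->
    f (t * x + (1 - t) * y) <= t * f x + (1 - t) * f y.

Definition concave_nonneg (R : realType) (f : R -> R) : Prop :=
  forall x y t : R, 0 <= x -> 0 <= y -> 0 <= t <= 1 ->
    t * f x + (1 - t) * f y <= f (t * x + (1 - t) * y).

From HB Require Import structures.
From mathcomp Require Import all_boot all_order all_algebra.
From mathcomp Require Import all_classical all_reals topology normedtype derive.
From mathcomp Require Import complex.
Set Implicit Arguments. Unset Strict Implicit. Unset Printing Implicit Defensive.
Import Order.TTheory GRing.Theory Num.Theory numFieldNormedType.Exports.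
Local Open Scope ring_scope.
Local Open Scope sesquilinear_scope.

(* Write a Hermitian A as U^* diag(a) U with U unitary.  The Loewner bounds
   m <= A <= M say that every eigenvalue a_i lies in [m, M] (test the quadratic
   form on the eigenvectors), and f(A) = U^* diag(f(a)) U.  Two facts combine:
   - scalar: for convex f with f(0) = 0 the slope f(x)/x is nondecreasing on
     (0, +oo) (nonincreasing for concave f), so on [m, M] it is squeezed between
     f(m)/m and f(M)/M;
   - matrix: Minkowski's determinant inequality
     det(A)^(1/n) + det(B)^(1/n) <= det(A + B)^(1/n), proved by a congruence
     reducing A to the identity and then AM-GM on the eigenvalues of B.
   An upper bound f(x) <= c x on the spectrum gives det(f(A))^(1/n) <= c det(A)^(1/n)
   eigenvalue-wise, whence (i) and (iii) by Minkowski; a lower bound c x <= f(x)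
   gives f(A) + f(B) = c (A + B) + (psd matrix), whence (ii) and (iv) by Minkowski
   and monotonicity of det^(1/n). *)

Section SpectralFacts.
Variable C : numClosedFieldType.
Variable n : nat.
Implicit Types (A U W X : 'M[C]_n) (v : 'rV[C]_n).

Lemma adjmxM m p q (X : 'M[C]_(m, p)) (Y : 'M[C]_(p, q)) :
  (X *m Y)^t* = Y^t* *m X^t*.
Proof. by rewrite trmx_mul map_mxM. Qed.

Lemma unitary_adjmxK U : U \is unitarymx -> U^t* *m U = 1%:M.
Proof. by move=> HU; rewrite -invmx_unitary // mulVmx // unitarymx_unit. Qed.

Lemma hermitian_adjmx A : A \is hermsymmx -> A^t* = A.
Proof. by move=> /is_hermitianmxP; rewrite expr0 scale1r => {2}->. Qed.

Lemma adjmx_hermitian X : X^t* = X -> X \is hermsymmx.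
Proof. by move=> HX; apply/is_hermitianmxP; rewrite expr0 scale1r HX. Qed.

Lemma hermitian_spectral A : A \is hermsymmx ->
  A = (spectralmx A)^t* *m diag_mx (spectral_diag A) *m spectralmx A.
Proof.
move=> HA; rewrite -invmx_unitary ?spectral_unitarymx //.
exact/orthomx_spectralP/hermitian_normalmx.
Qed.

Definition spectral_vec A (i : 'I_n) : 'rV[C]_n :=
  delta_mx 0 i *m spectralmx A.

Lemma spectral_vec_norm A i :
  (spectral_vec A i *m (spectral_vec A i)^t*) 0 0 = 1.
Proof.
rewrite /spectral_vec adjmxM trmx_delta map_delta_mx mulmxA.
by rewrite mulmxtVK ?spectral_unitarymx // mul_delta_mx mxE !eqxx.
Qed.

Lemma spectral_vec_neq0 A i : spectral_vec A i != 0.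
Proof.
apply/eqP => v0; have := spectral_vec_norm A i.
by rewrite v0 mul0mx mxE => /eqP; rewrite eq_sym oner_eq0.
Qed.

Lemma form_sub v X Y :
  (v *m (X - Y) *m v^t*) 0 0 = (v *m X *m v^t*) 0 0 - (v *m Y *m v^t*) 0 0.
Proof. by rewrite mulmxBr mulmxBl !mxE. Qed.

Lemma spectral_vec_scalar A i c :
  (spectral_vec A i *m c%:M *m (spectral_vec A i)^t*) 0 0 = c.
Proof. by rewrite mul_mx_scalar -scalemxAl mxE spectral_vec_norm mulr1. Qed.

(* The eigenvalues are the values of the quadratic form on the eigenvectors;
   this transfers every quadratic-form hypothesis to the spectrum. *)
Lemma spectral_diag_form A i : A \is hermsymmx ->
  spectral_diag A 0 i = (spectral_vec A i *m A *m (spectral_vec A i)^t*) 0 0.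
Proof.
move=> HA; have HU := spectral_unitarymx A; have eA := hermitian_spectral HA.
rewrite /spectral_vec; set U := spectralmx A; set d := spectral_diag A.
rewrite -/U -/d in eA HU; rewrite {1}eA adjmxM trmx_delta map_delta_mx.
rewrite !mulmxA mulmxtVK // -(mulmxA _ U) (unitarymxP HU) mulmx1.
rewrite mul_mx_diag !mxE (bigD1 i) //= big1 ?addr0; last first.
  by move=> k /negPf; rewrite !mxE eq_sym => ->; rewrite andbF !mul0r.
by rewrite !mxE !eqxx mul1r mulr1.
Qed.

Lemma det_unitary_conj U X : U \is unitarymx -> \det (U^t* *m X *m U) = \det X.
Proof.
by move=> HU; rewrite !det_mulmx mulrAC -det_mulmx unitary_adjmxK // det1 mul1r.
Qed.

Lemma det_hermitian A : A \is hermsymmx -> \det A = \prod_i spectral_diag A 0 i.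
Proof.
move=> HA; rewrite {1}(hermitian_spectral HA).
by rewrite det_unitary_conj ?spectral_unitarymx // det_diag.
Qed.

Lemma det_congr W X : \det (W *m X *m W^t*) = `|\det W| ^+ 2 * \det X.
Proof. by rewrite !det_mulmx det_map_mx det_tr normCK mulrAC. Qed.

Lemma form_conj_diag U (g : 'rV[C]_n) v :
  (v *m (U^t* *m diag_mx g *m U) *m v^t*) 0 0
  = \sum_j g 0 j * `|(v *m U^t*) 0 j| ^+ 2.
Proof.
have -> : v *m (U^t* *m diag_mx g *m U) *m v^t*
        = (v *m U^t*) *m diag_mx g *m (v *m U^t*)^t*.
  by rewrite adjmxM trmxCK !mulmxA.
rewrite mul_mx_diag !mxE; apply: eq_bigr => j _.
by rewrite !mxE normCK mulrAC mulrC mulrA.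
Qed.

(* The case of AM-GM behind Minkowski's inequality:
   1 + (prod e_i)^(1/n) <= (prod (1 + e_i))^(1/n) for e_i >= 0.  It adds the
   AM-GM inequalities for the weights 1/(1+e_i) and e_i/(1+e_i). *)
Lemma one_add_root_prod_le (e : 'I_n -> C) : (0 < n)%N -> (forall i, 0 <= e i) ->
  1 + n.-root (\prod_i e i) <= n.-root (\prod_i (1 + e i)).
Proof.
move=> n0 e_ge0; have e1_gt0 i : 0 < 1 + e i by rewrite ltr_wpDr.
set P := \prod_i (1 + e i); have P_gt0 : 0 < P by apply: prodr_gt0.
have AGM (F : 'I_n -> C) : (forall i, 0 <= F i) ->
    n.-root (\prod_i F i) <= (\sum_i F i) / n%:R.
  move=> F_ge0; have := (@leif_rootC_AGM C 'I_n predT F (fun i _ => F_ge0 i)).1.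
  by rewrite cardT size_enum_ord.
have w1_ge0 i : 0 <= (1 + e i)^-1 by rewrite invr_ge0 ltW.
have w2_ge0 i : 0 <= e i / (1 + e i) by exact: divr_ge0 (e_ge0 i) (ltW (e1_gt0 i)).
have := lerD (AGM _ w1_ge0) (AGM _ w2_ge0).
rewrite -mulrDl -big_split /=.
rewrite [X in _ <= X / _](eq_bigr (fun=> 1)); last first.
  by move=> i _; rewrite -[X in X + _]mul1r -mulrDl mulfV // gt_eqF.
rewrite sumr_const card_ord divff ?pnatr_eq0 -?lt0n //.
rewrite big_split /= prodfV rootCMl ?prodr_ge0 // rootCV ?(ltW P_gt0) //.
move=> H; rewrite -[X in _ <= X]mul1r -ler_pdivrMr ?rootC_gt0 //.
by rewrite mulrDl mul1r.
Qed.

End SpectralFacts.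

Section PositiveMatrices.
Variable R : realType.
Variable n : nat.
Implicit Types (A B P Q U W X : 'M[R[i]]_n).

Lemma posdef_psd A : posdefmx A -> psdmx A.
Proof.
case=> HA PA; split=> // v; have [->|/PA/ltW //] := eqVneq v 0.
by rewrite !mul0mx mxE.
Qed.

Lemma psd_spectral_ge0 A i : psdmx A -> 0 <= spectral_diag A 0 i.
Proof. by case=> HA PA; rewrite spectral_diag_form. Qed.

Lemma posdef_spectral_gt0 A i : posdefmx A -> 0 < spectral_diag A 0 i.
Proof. by case=> HA PA; rewrite spectral_diag_form // PA ?spectral_vec_neq0. Qed.

Lemma psd_det_ge0 A : psdmx A -> 0 <= \det A.
Proof.
move=> PA; rewrite det_hermitian; last by case: PA.
by apply: prodr_ge0 => i _; apply: psd_spectral_ge0.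
Qed.

Lemma psd_add A B : psdmx A -> psdmx B -> psdmx (A + B).
Proof.
case=> HA PA [HB PB]; split=> [|v]; last by rewrite mulmxDr mulmxDl mxE addr_ge0.
by apply: adjmx_hermitian; rewrite linearD /= map_mxD !hermitian_adjmx.
Qed.

Lemma posdef_add_psd A B : posdefmx A -> psdmx B -> posdefmx (A + B).
Proof.
move=> PA PB; have [HAB _] := psd_add (posdef_psd PA) PB; case: PA PB => _ PA [_ PB].
split=> // v v0; rewrite mulmxDr mulmxDl mxE.
by apply: lt_le_trans (PA v v0) _; rewrite lerDl.
Qed.

Lemma posdefZ (c : R) A : 0 < c -> posdefmx A -> posdefmx ((c%:C)%C *: A).
Proof.
move=> c0 [HA PA]; have c0C : 0 < (c%:C)%C :> R[i] by rewrite ltcR.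
split=> [|v v0]; last by rewrite -scalemxAr -scalemxAl mxE mulr_gt0 ?PA.
apply: adjmx_hermitian; rewrite linearZ /= map_mxZ hermitian_adjmx //.
by congr (_ *: _); apply: geC0_conj; rewrite ltW.
Qed.

Lemma psd_congr W B : psdmx B -> psdmx (W *m B *m W^t*).
Proof.
case=> HB PB; split=> [|v].
  by apply: adjmx_hermitian; rewrite !adjmxM trmxCK hermitian_adjmx // mulmxA.
have -> : v *m (W *m B *m W^t*) *m v^t* = (v *m W) *m B *m (v *m W)^t*.
  by rewrite adjmxM !mulmxA.
exact: PB.
Qed.

Lemma psd_conj_diag U (g : 'rV[R[i]]_n) : (forall j, 0 <= g 0 j) ->
  psdmx (U^t* *m diag_mx g *m U).
Proof.
move=> g_ge0; split=> [|v]; last first.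
  by rewrite form_conj_diag sumr_ge0 // => j _; rewrite mulr_ge0 ?exprn_ge0.
apply: adjmx_hermitian; rewrite !adjmxM trmxCK mulmxA tr_diag_mx map_diag_mx.
congr (_ *m diag_mx _ *m _); apply/matrixP => i j.
by rewrite ord1 mxE; apply: geC0_conj.
Qed.

(* Every positive definite matrix is congruent to the identity:
   W = diag(d_i^(-1/2)) U for A = U^* diag(d) U. *)
Lemma posdef_congr_id A : posdefmx A -> exists W, W *m A *m W^t* = 1%:M.
Proof.
move=> PA; have [HA _] := PA; have eA := hermitian_spectral HA.
have HU := spectral_unitarymx A; have d_gt0 i := posdef_spectral_gt0 i PA.
set U := spectralmx A; set d := spectral_diag A; rewrite -/U -/d in eA HU d_gt0.
set s := \row_i (sqrtC (d 0 i))^-1.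
have s_adj : (diag_mx s)^t* = diag_mx s.
  rewrite tr_diag_mx map_diag_mx; congr diag_mx; apply/matrixP => i j.
  by rewrite ord1 !mxE; apply: geC0_conj; rewrite invr_ge0 sqrtC_ge0 ltW.
exists (diag_mx s *m U); rewrite adjmxM s_adj {1}eA.
rewrite !mulmxA mulmxtVK // -(mulmxA _ U) (unitarymxP HU) mulmx1.
apply/matrixP => i j; rewrite mul_mx_diag mul_diag_mx !mxE.
have [->|_] := eqVneq i j; last by rewrite mulr0n mulr0 mul0r.
by rewrite !mulr1n mulrAC -expr2 exprVn sqrtCK mulVf ?gt_eqF.
Qed.

(* Minkowski's inequality at the identity: 1 + det(C)^(1/n) <= det(1 + C)^(1/n),
   which in an eigenbasis of C is the AM-GM consequence one_add_root_prod_le. *)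
Lemma minkowski_det_id X : (0 < n)%N -> psdmx X ->
  1 + n.-root (\det X) <= n.-root (\det (1%:M + X)).
Proof.
move=> n0 PX; have [HX _] := PX; have eX := hermitian_spectral HX.
have HV := spectral_unitarymx X; set V := spectralmx X; set e := spectral_diag X.
rewrite -/V -/e in eX HV.
have eX1 : 1%:M + X = V^t* *m diag_mx (\row_i (1 + e 0 i)) *m V.
  have -> : diag_mx (\row_i (1 + e 0 i)) = 1%:M + diag_mx e.
    by apply/matrixP => i j; rewrite !mxE; case: eqP; rewrite ?mulr1n ?mulr0n ?addr0.
  by rewrite mulmxDr mulmxDl mulmx1 unitary_adjmxK // -eX.
rewrite eX1 det_unitary_conj // det_diag det_hermitian //.
under [X in _ <= n.-root X]eq_bigr do rewrite mxE.
by apply: one_add_root_prod_le => // i; apply: psd_spectral_ge0.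
Qed.

(* A congruence W with
   W A W^* = 1 scales the three determinants by the same k = |det W|^2 > 0. *)
Lemma minkowski_det A B : (0 < n)%N -> posdefmx A -> psdmx B ->
  n.-root (\det A) + n.-root (\det B) <= n.-root (\det (A + B)).
Proof.
move=> n0 PA PB; have [W WA] := posdef_congr_id PA.
set k := `|\det W| ^+ 2.
have kA : k * \det A = 1 by rewrite -det_congr WA det1.
have k_gt0 : 0 < k.
  rewrite lt0r exprn_ge0 // andbT; apply/eqP => k0.
  by move: kA; rewrite k0 mul0r => /eqP; rewrite eq_sym oner_eq0.
have root_congr Y : n.-root (\det (W *m Y *m W^t*)) = n.-root k * n.-root (\det Y).
  by rewrite det_congr rootCMl ?ltW.
rewrite -(ler_pM2l (_ : 0 < n.-root k)) ?rootC_gt0 // mulrDr -!root_congr.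
rewrite WA det1 rootC1 // mulmxDr mulmxDl WA.
exact/minkowski_det_id/psd_congr.
Qed.

Lemma root_det_le_add_psd P Q : (0 < n)%N -> posdefmx P -> psdmx Q ->
  n.-root (\det P) <= n.-root (\det (P + Q)).
Proof.
move=> n0 PP PQ; apply: le_trans (minkowski_det n0 PP PQ).
by rewrite lerDl rootC_ge0 // psd_det_ge0.
Qed.
End PositiveMatrices.

Section FunctionalCalculus.
Variable R : realType.
Variable n : nat.
Implicit Types (A B X : 'M[R[i]]_n) (f : R -> R) (c m M : R).

Lemma between_real (z : R[i]) (a b : R) : (a%:C)%C <= z <= (b%:C)%C ->
  z = ((complex.Re z)%:C)%C /\ a <= complex.Re z <= b.
Proof.
case: z => x y; rewrite !lecE /= => /andP[/andP[/eqP y0 ax] /andP[_ xb]].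
by subst y; rewrite ax xb.
Qed.

Definition spectrum_within m M X : Prop :=
  forall i, (m%:C)%C <= spectral_diag X 0 i <= (M%:C)%C.

Lemma loewner_spectrum_within m M X : X \is hermsymmx ->
  loewner_le ((m%:C)%C%:M) X -> loewner_le X ((M%:C)%C%:M) ->
  spectrum_within m M X.
Proof.
move=> HX [_ Pm] [_ PM] i; rewrite spectral_diag_form //.
have := Pm (spectral_vec X i); rewrite form_sub spectral_vec_scalar subr_ge0 => ->.
by have := PM (spectral_vec X i); rewrite form_sub spectral_vec_scalar subr_ge0.
Qed.

Lemma mx_fun_spectral f X : mx_fun f X =
  (spectralmx X)^t*
  *m diag_mx (map_mx (fun z : R[i] => ((f (complex.Re z))%:C)%C) (spectral_diag X))
  *m spectralmx X.
Proof. by rewrite /mx_fun invmx_unitary // spectral_unitarymx. Qed.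

Lemma root_det_mx_fun_le f c m M X : (0 < n)%N -> 0 < m -> 0 <= c ->
  X \is hermsymmx -> spectrum_within m M X ->
  (forall x, m <= x <= M -> 0 <= f x) -> (forall x, m <= x <= M -> f x / x <= c) ->
  n.-root (\det (mx_fun f X)) <= (c%:C)%C * n.-root (\det X).
Proof.
move=> n0 m0 c0 HX SX f_ge0 Hf; have c0C : 0 <= (c%:C)%C :> R[i] by rewrite ler0c.
have eig_le i : 0 <= ((f (complex.Re (spectral_diag X 0 i)))%:C)%C
                     <= (c%:C)%C * spectral_diag X 0 i.
  have [-> hx] := between_real (SX i).
  have x_gt0 : 0 < complex.Re (spectral_diag X 0 i).
    by case/andP: hx => + _; apply: lt_le_trans.
  by rewrite ler0c f_ge0 // -rmorphM lecR -ler_pdivrMr ?Hf.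
have d_ge0 i : 0 <= spectral_diag X 0 i.
  by case/andP: (SX i) => + _; apply: le_trans; rewrite ler0c ltW.
rewrite mx_fun_spectral det_unitary_conj ?spectral_unitarymx // det_diag.
under eq_bigr do rewrite mxE.
have -> : (c%:C)%C = n.-root (\prod_(i < n) (c%:C)%C) :> R[i].
  by rewrite prodr_const card_ord exprCK.
rewrite (det_hermitian HX) -rootCMl ?prodr_ge0 // -big_split /=.
rewrite ler_rootC ?nnegrE //; first by apply: ler_prod => i _; apply: eig_le.
  by apply: prodr_ge0 => i _; case/andP: (eig_le i).
by apply: prodr_ge0 => i _; rewrite mulr_ge0.
Qed.

Lemma psd_mx_fun_sub f c m M X : 0 < m -> X \is hermsymmx ->
  spectrum_within m M X -> (forall x, m <= x <= M -> c <= f x / x) ->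
  psdmx (mx_fun f X - (c%:C)%C *: X).
Proof.
move=> m0 HX SX Hf; have eX := hermitian_spectral HX; rewrite mx_fun_spectral.
set U := spectralmx X in eX *; set d := spectral_diag X in eX SX *.
rewrite {1}eX scalemxAl scalemxAr -linearZ /= -mulmxBl -mulmxBr -linearB /=.
apply: psd_conj_diag => i; rewrite !mxE.
have [-> /[dup] hx /Hf] := between_real (SX i).
have x_gt0 : 0 < complex.Re (d 0 i) by case/andP: hx => + _; apply: lt_le_trans.
by rewrite /= -rmorphM -rmorphB ler0c subr_ge0 ler_pdivlMr.
Qed.

(* The lower bound c det(X + Y)^(1/n) <= det(f(X) + f(Y))^(1/n): f(X) + f(Y) is
   c (X + Y) plus a psd matrix, and det^(1/n) is monotone. *)
Lemma root_det_mx_fun_ge f c m M X Y : (0 < n)%N -> 0 < m -> 0 <= c ->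
  posdefmx X -> posdefmx Y -> spectrum_within m M X -> spectrum_within m M Y ->
  (forall x, m <= x <= M -> c <= f x / x) ->
  (c%:C)%C * n.-root (\det (X + Y)) <= n.-root (\det (mx_fun f X + mx_fun f Y)).
Proof.
move=> n0 m0 c0 PX PY SX SY Hf.
have PQ := psd_add (psd_mx_fun_sub m0 PX.1 SX Hf) (psd_mx_fun_sub m0 PY.1 SY Hf).
have -> : mx_fun f X + mx_fun f Y = (c%:C)%C *: (X + Y)
    + ((mx_fun f X - (c%:C)%C *: X) + (mx_fun f Y - (c%:C)%C *: Y)).
  by rewrite scalerDr [RHS]addrC addrACA !subrK.
have [c_eq0|c_neq0] := eqVneq c 0.
  rewrite c_eq0 (rmorph0 (real_complex R)) mul0r scale0r add0r rootC_ge0 //.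
  by apply: psd_det_ge0; move: PQ; rewrite c_eq0 (rmorph0 (real_complex R)).
have c_gt0 : 0 < c by rewrite lt0r c_neq0.
have c0C : 0 <= (c%:C)%C :> R[i] by rewrite ler0c.
apply: le_trans (root_det_le_add_psd n0 (posdefZ c_gt0 (posdef_add_psd PX (posdef_psd PY))) PQ).
by rewrite detZ rootCMl ?exprn_ge0 // exprCK.
Qed.

Lemma root_det_mx_fun_sum_le f c m M A B : (0 < n)%N -> 0 < m -> 0 <= c ->
  posdefmx A -> posdefmx B -> spectrum_within m M A -> spectrum_within m M B ->
  (forall x, m <= x <= M -> 0 <= f x) -> (forall x, m <= x <= M -> f x / x <= c) ->
  n.-root (\det (mx_fun f A)) + n.-root (\det (mx_fun f B))
    <= (c%:C)%C * n.-root (\det (A + B)).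
Proof.
move=> n0 m0 c0 PA PB SA SB f_ge0 Hf.
apply: le_trans (lerD (root_det_mx_fun_le n0 m0 c0 PA.1 SA f_ge0 Hf)
                      (root_det_mx_fun_le n0 m0 c0 PB.1 SB f_ge0 Hf)) _.
rewrite -mulrDr; apply: ler_wpM2l; first by rewrite ler0c.
exact: minkowski_det (posdef_psd PB).
Qed.

Lemma root_det_mx_fun_sum_ge f c m M A B : (0 < n)%N -> 0 < m -> 0 <= c ->
  posdefmx A -> posdefmx B -> spectrum_within m M A -> spectrum_within m M B ->
  (forall x, m <= x <= M -> c <= f x / x) ->
  (c%:C)%C * (n.-root (\det A) + n.-root (\det B))
    <= n.-root (\det (mx_fun f A + mx_fun f B)).
Proof.
move=> n0 m0 c0 PA PB SA SB Hf.
apply: le_trans (root_det_mx_fun_ge n0 m0 c0 PA PB SA SB Hf).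
apply: ler_wpM2l; first by rewrite ler0c.
exact: minkowski_det (posdef_psd PB).
Qed.
End FunctionalCalculus.

Section Slopes.
Variable R : realType.
Implicit Types (f : R -> R) (x y : R).

(* For convex f with f(0) = 0 the slope f(x)/x is nondecreasing on (0, +oo):
   convexity between 0 and y at the point x = (x/y) y gives f(x) <= (x/y) f(y). *)
Lemma convex_slope_le f x y : convex_nonneg f -> f 0 = 0 ->
  0 < x -> x <= y -> f x / x <= f y / y.
Proof.
move=> Hf f0 x_gt0 xy; have y_gt0 := lt_le_trans x_gt0 xy.
have t01 : 0 <= x / y <= 1.
  by apply/andP; split; [rewrite divr_ge0 ?ltW | rewrite ler_pdivrMr // mul1r].
have := Hf y 0 (x / y) (ltW y_gt0) (lexx 0) t01.
rewrite mulr0 addr0 f0 mulr0 addr0 divfK ?gt_eqF // ler_pdivrMr //.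
by rewrite [f y / y * x]mulrC mulrA [x / y * f y]mulrAC.
Qed.

Lemma concave_oppr f : concave_nonneg f -> convex_nonneg (fun x => - f x).
Proof. by move=> Hf x y t x0 y0 t01; rewrite !mulrN -opprD lerN2 Hf. Qed.

Lemma concave_slope_ge f x y : concave_nonneg f -> f 0 = 0 ->
  0 < x -> x <= y -> f y / y <= f x / x.
Proof.
move=> Hf f0 x_gt0 xy; rewrite -lerN2 -!mulNr.
by apply: convex_slope_le (concave_oppr Hf) _ x_gt0 xy; rewrite f0 oppr0.
Qed.
End Slopes.

Unset Implicit Arguments.

Theorem theorem3p2 (R : realType) (n : nat) (m M : R) (A B : 'M[R[i]]_n) :
  (0 < n)%N -> 0 < m -> m < M ->
  posdefmx A -> posdefmx B ->
  loewner_le ((m%:C)%C%:M) A -> loewner_le A ((M%:C)%C%:M) ->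
  loewner_le ((m%:C)%C%:M) B -> loewner_le B ((M%:C)%C%:M) ->
  (forall f : R -> R,
     (forall x, 0 <= x -> 0 <= f x) ->
     differentiable_nonneg f -> convex_nonneg f -> f 0 = 0 ->
     (n.-root (\det (mx_fun f A)) + n.-root (\det (mx_fun f B))
        <= ((f M / M)%:C)%C * n.-root (\det (A + B)))
     /\
     (((f m / m)%:C)%C * (n.-root (\det A) + n.-root (\det B))
        <= n.-root (\det (mx_fun f A + mx_fun f B))))
  /\
  (forall f : R -> R,
     (forall x, 0 <= x -> 0 <= f x) ->
     differentiable_nonneg f -> concave_nonneg f -> f 0 = 0 ->
     (n.-root (\det (mx_fun f A)) + n.-root (\det (mx_fun f B))
        <= ((f m / m)%:C)%C * n.-root (\det (A + B)))
     /\
     (((f M / M)%:C)%C * (n.-root (\det A) + n.-root (\det B))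
        <= n.-root (\det (mx_fun f A + mx_fun f B)))).
Proof.
move=> n0 m0 mM PA PB lbA ubA lbB ubB.
have SA := loewner_spectrum_within PA.1 lbA ubA.
have SB := loewner_spectrum_within PB.1 lbB ubB.
have in_gt0 x : m <= x <= M -> 0 < x by case/andP => + _; apply: lt_le_trans.
have M_gt0 : 0 < M by apply: in_gt0; rewrite ltW ?lexx.
split=> f f_ge0 _ Hf f0.
all: have f_ge0_in x : m <= x <= M -> 0 <= f x by move/in_gt0/ltW; apply: f_ge0.
all: have slope_ge0 x : 0 < x -> 0 <= f x / x by move=> x0; rewrite divr_ge0 ?f_ge0 ?ltW.
- have slope x : m <= x <= M -> f m / m <= f x / x <= f M / M.
    move=> /[dup] /in_gt0 x_gt0 /andP[mx xM].
    by rewrite (convex_slope_le Hf f0 m0 mx) (convex_slope_le Hf f0 x_gt0 xM).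
  split.
  + apply: root_det_mx_fun_sum_le SA SB f_ge0_in _ => //; first exact: slope_ge0.
    by move=> x /slope/andP[].
  + apply: root_det_mx_fun_sum_ge SA SB _ => //; first exact: slope_ge0.
    by move=> x /slope/andP[].
- have slope x : m <= x <= M -> f M / M <= f x / x <= f m / m.
    move=> /[dup] /in_gt0 x_gt0 /andP[mx xM].
    by rewrite (concave_slope_ge Hf f0 m0 mx) (concave_slope_ge Hf f0 x_gt0 xM).
  split.
  + apply: root_det_mx_fun_sum_le SA SB f_ge0_in _ => //; first exact: slope_ge0.
    by move=> x /slope/andP[].
  + apply: root_det_mx_fun_sum_ge SA SB _ => //; first exact: slope_ge0.
    by move=> x /slope/andP[].
Qed.
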